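(* Let $M=\bigoplus_{\mathbf a\in\mathbb Z^d}M_{\mathbf a}$ be a $\mathbb Z^d$-graded left $D(R_A)$-module (i.e. $D(R_A)_{\mathbf b}M_{\mathbf a}\subseteq M_{\mathbf a+\mathbf b}$) which is simple as a graded module (it has no nonzero proper $\mathbb Z^d$-graded submodules). Then $M$ is isomorphic to $L(\boldsymbol\alpha)$ as a left $D(R_A)$-module for some $\boldsymbol\alpha\in\mathbb C^d$.
   Context: $A\subset\mathbb Z^d$ is a finite set generating the group $\mathbb Z^d$; $R_A=\mathbb C[\mathbb NA]\subseteq\mathbb C[t_1^{\pm1},\dots,t_d^{\pm1}]$; $D(R_A)=\{P\in\mathbb C[t^{\pm1}]\langle\partial_1,\dots,\partial_d\rangle: P(R_A)\subseteq R_A\}$; $s_j=t_j\partial_j$; $D(R_A)_{\mathbf a}=\{P\in D(R_A):[s_j,P]=a_jP\ \forall j\}$, giving $D(R_A)=\bigoplus_{\mathbf a\in\mathbb Z^d}D(R_A)_{\mathbf a}$. $M(\boldsymbol\alpha)=D(R_A)/\sum_iD(R_A)(s_i-\alpha_i)$; in the category $\mathcal O$ of left $D(R_A)$-modules that are direct sums of finite-dimensional weight spaces $M_{\boldsymbol\lambda}=\{x:f(s)x=f(\boldsymbol\lambda)x\ \forall f\in\mathbb C[s]\}$, $M(\boldsymbol\alpha)$ has a unique simple quotient, denoted $L(\boldsymbol\alpha)$. *)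

From mathcomp Require Import all_boot all_algebra.
From mathcomp Require Import complex Rstruct.
Set Implicit Arguments. Unset Strict Implicit. Unset Printing Implicit Defensive.
Import GRing.Theory Num.Theory.
Local Open Scope ring_scope.

Definition C : numClosedFieldType := Rdefinitions.R[i].

Definition Zd (d : nat) := 'rV[int]_d.
Definition ev (d : nat) (j : 'I_d) : Zd d := delta_mx 0 j.

(* Laurent polynomials are encoded by their coefficient functions
   Z^d -> C (coefficient of t^c).  We let operators act on the space F d of all
   coefficient functions; the Laurent polynomial ring C[t^{+-1}] is the subspace
   of finitely supported ones. *)
Definition F (d : nat) := Zd d -> C.

(* multiplication by t_j, by t_j^{-1}, the derivation d/dt_j, scalars *)
Definition tmul d (j : 'I_d) (p : F d) : F d := fun c => p (c - ev j).
Definition tinv d (j : 'I_d) (p : F d) : F d := fun c => p (c + ev j).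
Definition dpart d (j : 'I_d) (p : F d) : F d :=
  fun c => ((c 0 j) + 1)%:~R * p (c + ev j).
Definition scal d (l : C) (p : F d) : F d := fun c => l * p c.

Definition opadd d (P Q : F d -> F d) : F d -> F d := fun p c => P p c + Q p c.
Definition opcomp d (P Q : F d -> F d) : F d -> F d := fun p => P (Q p).

Inductive WeylOp (d : nat) : (F d -> F d) -> Prop :=
  | W_scal (l : C) : WeylOp (scal l)
  | W_t (j : 'I_d) : WeylOp (tmul j)
  | W_tinv (j : 'I_d) : WeylOp (tinv j)
  | W_d (j : 'I_d) : WeylOp (dpart j)
  | W_add P Q : WeylOp P -> WeylOp Q -> WeylOp (opadd P Q)
  | W_comp P Q : WeylOp P -> WeylOp Q -> WeylOp (opcomp P Q).

Definition sop d (j : 'I_d) : F d -> F d := opcomp (tmul j) (dpart j).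

Definition inNA d (A : seq (Zd d)) (c : Zd d) : Prop :=
  exists k : 'I_(size A) -> nat, c = \sum_(i < size A) (A`_i *+ k i).

Definition generates_Zd d (A : seq (Zd d)) : Prop :=
  forall c : Zd d, exists z : 'I_(size A) -> int, c = \sum_(i < size A) (A`_i *~ z i).

Definition inRA d (A : seq (Zd d)) (p : F d) : Prop :=
  (exists s : seq (Zd d), forall c, p c != 0 -> c \in s) /\
  (forall c, p c != 0 -> inNA A c).

Definition inD d (A : seq (Zd d)) (P : F d -> F d) : Prop :=
  WeylOp P /\ forall p, inRA A p -> inRA A (P p).

Definition inDdeg d (A : seq (Zd d)) (a : Zd d) (P : F d -> F d) : Prop :=
  inD A P /\
  forall (j : 'I_d) (p : F d) (c : Zd d),
    sop j (P p) c - P (sop j p) c = (a 0 j)%:~R * P p c.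

Definition isDModule d (A : seq (Zd d)) (M : zmodType) (act : (F d -> F d) -> M -> M)
  : Prop :=
  [/\ forall P x y, inD A P -> act P (x + y) = act P x + act P y,
      forall P Q x, inD A P -> inD A Q -> act (opadd P Q) x = act P x + act Q x,
      forall P Q x, inD A P -> inD A Q -> act (opcomp P Q) x = act P (act Q x)
    & forall x, act id x = x].

Definition isDSubmodule d (A : seq (Zd d)) (M : zmodType) (act : (F d -> F d) -> M -> M)
  (N : M -> Prop) : Prop :=
  [/\ N 0, forall x y, N x -> N y -> N (x + y)
    & forall P x, inD A P -> N x -> N (act P x)].

Definition isGraded d (A : seq (Zd d)) (M : zmodType) (act : (F d -> F d) -> M -> M)
  (grade : Zd d -> M -> Prop) : Prop :=
  [/\ forall a, grade a 0,
      forall a x y, grade a x -> grade a y -> grade a (x - y),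
      (forall x, exists (s : seq (Zd d)) (f : Zd d -> M),
          [/\ uniq s, forall a, grade a (f a) & x = \sum_(a <- s) f a]),
      (forall (s : seq (Zd d)) (f : Zd d -> M), uniq s ->
          (forall a, a \in s -> grade a (f a)) -> \sum_(a <- s) f a = 0 ->
          forall a, a \in s -> f a = 0)
    & forall b a P x, inDdeg A b P -> grade a x -> grade (a + b) (act P x)].

Definition isGradedSubmodule d (A : seq (Zd d)) (M : zmodType)
  (act : (F d -> F d) -> M -> M) (grade : Zd d -> M -> Prop) (N : M -> Prop) : Prop :=
  isDSubmodule A act N /\
  forall x (s : seq (Zd d)) (f : Zd d -> M), N x -> uniq s ->
    (forall a, a \in s -> grade a (f a)) -> x = \sum_(a <- s) f a ->
    forall a, a \in s -> N (f a).

Definition gradedSimple d (A : seq (Zd d)) (M : zmodType)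
  (act : (F d -> F d) -> M -> M) (grade : Zd d -> M -> Prop) : Prop :=
  (exists x : M, x != 0) /\
  forall N, isGradedSubmodule A act grade N ->
    (forall x, N x -> x = 0) \/ (forall x, N x).

Definition DSimple d (A : seq (Zd d)) (M : zmodType) (act : (F d -> F d) -> M -> M)
  : Prop :=
  (exists x : M, x != 0) /\
  forall N, isDSubmodule A act N -> (forall x, N x -> x = 0) \/ (forall x, N x).

(* M(alpha) = D(R_A) / sum_i D(R_A)(s_i - alpha_i).  A surjective D(R_A)-linear
   map M(alpha) -> M is the same as a vector m in M with (s_i - alpha_i) m = 0
   for all i and D(R_A) m = M (universal property of the cyclic module M(alpha)).
   L(alpha) is the unique simple quotient of M(alpha); hence M is isomorphic to
   L(alpha) iff M is a simple D(R_A)-module that is a quotient of M(alpha). *)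
Definition isoL d (A : seq (Zd d)) (M : zmodType) (act : (F d -> F d) -> M -> M)
  (alpha : 'I_d -> C) : Prop :=
  DSimple A act /\
  exists m : M,
    (forall i : 'I_d, act (sop i) m = act (scal (alpha i)) m) /\
    (forall x : M, exists P, inD A P /\ act P m = x).

(** Every operator of C[t^{+-1}]<d_1,...,d_d> is a finite sum of homogeneous operators
   t^b g(s) with g a polynomial, and the homogeneous components of an element of D(R_A)
   lie again in D(R_A) (test them on the monomials t^e, e in NA).  Hence, if x is a
   nonzero homogeneous element of degree a0 of the graded-simple module M, then
   D(R_A) x is a graded submodule, so it is M, and every y in M_a is t^(a-a0) g(s) x.

   So M_a0 is a module over the commutative algebra of the g(s) that is generated by
   each of its nonzero elements, and each s_j acts on it by a scalar (Dixmier): an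
   eigenvector spreads to all of M_a0, while if every s_j - mu were injective on M_a0
   it would be invertible there, and the vectors (s_j - mu)^-1 x, mu real, would be
   uncountably many independent vectors in the span of the countably many w(s) x,
   w a word in the s_j.

   If alpha_j is the eigenvalue of s_j on M_a0, then s_j acts on M_a by
   alpha_j + (a - a0)_j.  The homogeneous components of an element of a submodule are
   therefore separated by the s_j and lie in the submodule, so every submodule is
   graded, M is simple, and x is a weight vector of weight alpha generating M. *)

From mathcomp Require Import all_boot all_algebra.
From mathcomp Require Import complex Rstruct ring.
From mathcomp Require Import boolp classical_sets functions cardinality.
From Stdlib Require Import Runcountable.
Import GRing.Theory Num.Theory.
Set Implicit Arguments. Unset Strict Implicit. Unset Printing Implicit Defensive.

Local Open Scope ring_scope.

Section Uncountability.
Local Open Scope classical_set_scope.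
Local Open Scope card_scope.
Local Notation R := Rdefinitions.R.

Lemma setR_uncountable : ~ countable [set: R].
Proof.
move=> cR.
have natR : [set: nat] #<= [set: R].
  have [g] : $|{injfun [set: nat] >-> [set: R]}|.
    by apply/injfunPex; exists (fun n => n%:R : R) => // m n _ _ /eqP; rewrite eqr_nat => /eqP.
  exact: inj_card_le g.
move: (Cantor_Bernstein cR natR) => /pcard_eqP /bijPex [f [_ f_inj f_surj]].
have /choice [u uK] : forall n : nat, exists r : R, f r = n.
  by move=> n; have [r _ <-] := f_surj n I; exists r.
apply: (R_uncountable u); exists f; split => // r.
by apply: f_inj; rewrite ?inE ?uK.
Qed.

Lemma large_fiber (Q : nat -> R -> Prop) : (forall r, exists n, Q n r) ->
  exists n (s : seq R), [/\ uniq s, (n < size s)%N & forall r, r \in s -> Q n r].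
Proof.
move=> Qcover; apply: contrapT => no_large; apply: setR_uncountable.
have Qfin n : finite_set (Q n).
  apply: contrapT => /(infinite_set_fset n.+1) [B BQ Bsize]; apply: no_large.
  exists n, (finmap.enum_fset B); split; [exact: finmap.fset_uniq | exact: Bsize |].
  by move=> r rB; apply: BQ.
have -> : [set: R] = \bigcup_(n in [set: nat]) Q n.
  by apply/seteqP; split=> r // _; have [n Qnr] := Qcover r; exists n.
by apply: bigcup_countable => // n _; apply: finite_set_countable.
Qed.

End Uncountability.

Section Operators.
Variable d : nat.
Implicit Types (p : F d) (b c : Zd d) (g : Zd d -> C) (j : 'I_d) (P Q : F d -> F d).

(* [tshift b] is multiplication by t^b and [spoly g] is g(s), since s_j t^c = c_j t^c. *)
Definition tshift b : F d -> F d := fun p c => p (c - b).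
Definition spoly g : F d -> F d := fun p c => g c * p c.
Definition homop b g : F d -> F d := opcomp (tshift b) (spoly g).

Lemma homopE b g p c : homop b g p c = g (c - b) * p (c - b).
Proof. by []. Qed.

Lemma op_ext P Q : (forall p c, P p c = Q p c) -> P = Q.
Proof. by move=> PQ; apply: funext => p; apply: (@funext (Zd d) C) => c. Qed.

Lemma ev_diag j : ev j 0 j = 1.
Proof. by rewrite mxE !eqxx. Qed.

Lemma sopE j p c : sop j p c = (c 0 j)%:~R * p c.
Proof.
by rewrite /sop /opcomp /tmul /dpart subrK [(c - ev j) 0 j]mxE [(- ev j) 0 j]mxE ev_diag subrK.
Qed.

Inductive polyfun : (Zd d -> C) -> Prop :=
  | polyfun_cst (l : C) : polyfun (fun _ => l)
  | polyfun_coord j : polyfun (fun c => (c 0 j)%:~R)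
  | polyfun_add g1 g2 : polyfun g1 -> polyfun g2 -> polyfun (fun c => g1 c + g2 c)
  | polyfun_mul g1 g2 : polyfun g1 -> polyfun g2 -> polyfun (fun c => g1 c * g2 c).

Lemma polyfun_shift g b : polyfun g -> polyfun (fun c => g (c + b)).
Proof.
elim=> [l|j|g1 g2 _ ih1 _ ih2|g1 g2 _ ih1 _ ih2]; last 2 first.
- exact: polyfun_add.
- exact: polyfun_mul.
- exact: polyfun_cst.
have -> : (fun c : Zd d => ((c + b) 0 j)%:~R : C) = (fun c => (c 0 j)%:~R + (b 0 j)%:~R).
  by apply: (@funext (Zd d) C) => c; rewrite mxE intrD.
exact: polyfun_add (polyfun_coord j) (polyfun_cst _).
Qed.

Definition poly_sop j (q : {poly C}) : F d -> F d := spoly (fun c => q.[(c 0 j)%:~R]).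

Lemma polyfun_horner j (q : {poly C}) : polyfun (fun c => q.[(c 0 j)%:~R]).
Proof.
elim/poly_ind: q => [|q a ih].
  have -> : (fun c : Zd d => (0 : {poly C}).[(c 0 j)%:~R]) = fun=> 0.
    by apply: funext => c; rewrite horner0.
  exact: polyfun_cst.
have -> : (fun c : Zd d => (q * 'X + a%:P).[(c 0 j)%:~R]) =
    fun c => q.[(c 0 j)%:~R] * (c 0 j)%:~R + a.
  by apply: funext => c; rewrite hornerMXaddC.
exact: polyfun_add (polyfun_mul ih (polyfun_coord j)) (polyfun_cst a).
Qed.

Lemma sop_spoly j : sop j = spoly (fun c => (c 0 j)%:~R).
Proof. by apply: op_ext => p c; rewrite sopE. Qed.

Lemma scal_spoly (l : C) : scal l = spoly (fun _ => l).
Proof. by []. Qed.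

Lemma spoly_homop g : spoly g = homop 0 g.
Proof. by apply: op_ext => p c; rewrite homopE subr0. Qed.

Lemma WeylOp_spoly g : polyfun g -> WeylOp (spoly g).
Proof.
elim=> [l|j|g1 g2 _ ih1 _ ih2|g1 g2 _ ih1 _ ih2].
- exact: W_scal.
- by rewrite -sop_spoly; apply: W_comp (W_t j) (W_d j).
- have -> : spoly (fun c => g1 c + g2 c) = opadd (spoly g1) (spoly g2).
    by apply: op_ext => p c; rewrite /opadd /spoly mulrDl.
  exact: W_add.
- have -> : spoly (fun c => g1 c * g2 c) = opcomp (spoly g1) (spoly g2).
    by apply: op_ext => p c; rewrite /opcomp /spoly mulrA.
  exact: W_comp.
Qed.

Lemma tshift0 : tshift 0 = scal 1.
Proof. by apply: op_ext => p c; rewrite /tshift /scal subr0 mul1r. Qed.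

Lemma tshiftD b1 b2 : tshift (b1 + b2) = opcomp (tshift b1) (tshift b2).
Proof. by apply: op_ext => p c; rewrite /opcomp /tshift opprD addrA. Qed.

Lemma WeylOp_tshiftMn b n : WeylOp (tshift b) -> WeylOp (tshift (b *+ n)).
Proof.
move=> Wb; elim: n => [|n ih]; first by rewrite mulr0n tshift0; apply: W_scal.
by rewrite mulrS tshiftD; apply: W_comp.
Qed.

Lemma WeylOp_tshift b : WeylOp (tshift b).
Proof.
have WevN j : WeylOp (tshift (- ev j)).
  have -> : tshift (- ev j) = tinv j by apply: op_ext => p c; rewrite /tshift opprK.
  exact: W_tinv.
rewrite (row_sum_delta b); elim/big_rec: _ => [|j b' _ Wb'].
  by rewrite tshift0; apply: W_scal.
rewrite tshiftD; apply: W_comp Wb'.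
have -> : b 0 j *: 'e_j = ev j *~ b 0 j by rewrite -scaler_int intz.
case: (b 0 j) => n; first exact: WeylOp_tshiftMn (W_t j).
by rewrite NegzE mulrNz -mulNrn; apply: WeylOp_tshiftMn (WevN j).
Qed.

Lemma WeylOp_homop b g : polyfun g -> WeylOp (homop b g).
Proof. by move=> pg; apply: W_comp (WeylOp_tshift b) (WeylOp_spoly pg). Qed.

Lemma WeylOp_scal P (l : C) p : WeylOp P -> P (scal l p) = scal l (P p).
Proof.
move=> WP; elim: WP p => [l'|j|j|j|P1 P2 _ ih1 _ ih2|P1 P2 _ ih1 _ ih2] p;
  apply: (@funext (Zd d) C) => c //; rewrite /scal.
- by rewrite mulrCA.
- by rewrite /dpart mulrCA.
- by rewrite /opadd ih1 ih2 /scal mulrDr.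
- by rewrite /opcomp ih2 ih1.
Qed.

End Operators.

Section NormalForm.
Variable d : nat.
Implicit Types (p : F d) (b c : Zd d) (P : F d -> F d).

Definition term := (Zd d * {g : Zd d -> C | polyfun g})%type.

Definition nf_eval (L : seq term) p c := \sum_(y <- L) homop y.1 (sval y.2) p c.

Definition term_comp (x y : term) : term :=
  (x.1 + y.1, exist _ (fun z => sval x.2 (z + y.1) * sval y.2 z)
     (polyfun_mul (polyfun_shift y.1 (svalP x.2)) (svalP y.2))).

Lemma homop_comp (x y : term) p c :
  homop x.1 (sval x.2) (homop y.1 (sval y.2) p) c =
  homop (term_comp x y).1 (sval (term_comp x y).2) p c.
Proof. by rewrite !homopE /= opprD addrA subrK mulrA. Qed.

Lemma WeylOp_normal_form P : WeylOp P -> exists L, forall p c, P p c = nf_eval L p c.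
Proof.
rewrite /nf_eval.
elim=> [l|j|j|j|P1 Q1 _ [L1 h1] _ [L2 h2]|P1 Q1 _ [L1 h1] _ [L2 h2]].
- exists [:: (0, exist _ _ (polyfun_cst d l))] => p c.
  by rewrite big_seq1 -spoly_homop.
- exists [:: (ev j, exist _ _ (polyfun_cst d 1))] => p c.
  by rewrite big_seq1 homopE mul1r.
- exists [:: (- ev j, exist _ _ (polyfun_cst d 1))] => p c.
  by rewrite big_seq1 homopE mul1r opprK.
- exists [:: (- ev j, exist _ _ (polyfun_coord j))] => p c.
  by rewrite big_seq1 homopE /= opprK [(c + ev j) 0 j]mxE ev_diag.
- by exists (L1 ++ L2) => p c; rewrite /opadd big_cat h1 h2.
- exists [seq term_comp x y | x <- L1, y <- L2] => p c.
  rewrite /opcomp h1 big_allpairs_dep; apply: eq_bigr => x _.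
  rewrite homopE h2 mulr_sumr; apply: eq_bigr => y _.
  by rewrite -homop_comp homopE.
Qed.

Definition nf_coef (L : seq term) b : Zd d -> C :=
  fun z => \sum_(y <- L | y.1 == b) sval y.2 z.

Lemma polyfun_nf_coef L b : polyfun (nf_coef L b).
Proof.
elim: L => [|y L ih].
  have -> : nf_coef [::] b = fun=> 0 by apply: funext => z; rewrite /nf_coef big_nil.
  exact: polyfun_cst.
have -> : nf_coef (y :: L) b = fun z => (if y.1 == b then sval y.2 z else 0) + nf_coef L b z.
  by apply: funext => z; rewrite /nf_coef big_cons; case: ifP; rewrite ?add0r.
case: (y.1 == b); first exact: polyfun_add (svalP y.2) ih.
exact: polyfun_add (polyfun_cst _ _) ih.
Qed.

Lemma homop_nf_coef L b p c :
  homop b (nf_coef L b) p c = \sum_(y <- L | y.1 == b) homop y.1 (sval y.2) p c.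
Proof. by rewrite homopE /nf_coef mulr_suml; apply: eq_bigr => y /eqP ->. Qed.

Lemma sum_eq_pred1 (s : seq (Zd d)) b (x : C) : uniq s -> b \in s ->
  \sum_(b' <- s | b == b') x = x.
Proof.
move=> us bs; rewrite -big_filter (@eq_filter _ _ (pred1 b)) => [|b']; last exact: eq_sym.
by rewrite filter_pred1_uniq // big_seq1.
Qed.

Lemma nf_eval_grouped L (s : seq (Zd d)) p c : uniq s -> {subset map fst L <= s} ->
  nf_eval L p c = \sum_(b <- s) homop b (nf_coef L b) p c.
Proof.
move=> us; elim: L => [|y L ih] sub.
  by rewrite /nf_eval big_nil big1 // => b _; rewrite homop_nf_coef big_nil.
under eq_bigr do rewrite homop_nf_coef big_mkcond big_cons -big_mkcond -homop_nf_coef.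
rewrite big_split -big_mkcond sum_eq_pred1 ?sub ?mem_head //= -ih.
  by rewrite /nf_eval big_cons.
by move=> b bL; apply: sub; rewrite inE bL orbT.
Qed.

Lemma nf_coef_notin L b : b \notin map fst L -> nf_coef L b = fun=> 0.
Proof.
elim: L => [_|y L ih] /=; first by apply: funext => z; rewrite /nf_coef big_nil.
rewrite inE negb_or eq_sym => /andP[/negbTE yb /ih {}ih]; apply: funext => z.
by rewrite /nf_coef big_cons yb -/(nf_coef L b z) ih.
Qed.

Lemma WeylOp_homogeneous_decomposition P : WeylOp P ->
  exists (s : seq (Zd d)) (g : Zd d -> Zd d -> C),
    [/\ uniq s, forall b, polyfun (g b), forall b, b \notin s -> g b = (fun=> 0)
      & forall p c, P p c = \sum_(b <- s) homop b (g b) p c].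
Proof.
case/WeylOp_normal_form=> L PL; exists (undup (map fst L)), (nf_coef L); split.
- exact: undup_uniq.
- exact: polyfun_nf_coef.
- by move=> b; rewrite mem_undup; apply: nf_coef_notin.
- move=> p c; rewrite PL; apply: nf_eval_grouped; first exact: undup_uniq.
  by move=> b; rewrite mem_undup.
Qed.

End NormalForm.

Section DifferentialOperators.
Variables (d : nat) (A : seq (Zd d)).
Implicit Types (p q : F d) (b c e : Zd d) (g : Zd d -> C) (P Q : F d -> F d).

Lemma inRA_add p q : inRA A p -> inRA A q -> inRA A (fun c => p c + q c).
Proof.
move=> [[s1 s1p] NAp] [[s2 s2q] NAq]; split.
  exists (s1 ++ s2) => c; rewrite mem_cat.
  by case: (eqVneq (p c) 0) => [->|/s1p -> //]; rewrite add0r => /s2q ->; rewrite orbT.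
by move=> c; case: (eqVneq (p c) 0) => [->|/NAp //]; rewrite add0r => /NAq.
Qed.

Lemma inRA_mul g p : inRA A p -> inRA A (fun c => g c * p c).
Proof.
have nz_r c : g c * p c != 0 -> p c != 0 by apply: contraNneq => ->; rewrite mulr0.
by move=> [[s sp] NAp]; split; [exists s => c /nz_r /sp | move=> c /nz_r /NAp].
Qed.

Lemma inD_add P Q : inD A P -> inD A Q -> inD A (opadd P Q).
Proof.
move=> [WP RP] [WQ RQ]; split; first exact: W_add.
by move=> p Rp; apply: inRA_add; [apply: RP | apply: RQ].
Qed.

Lemma inD_comp P Q : inD A P -> inD A Q -> inD A (opcomp P Q).
Proof. by move=> [WP RP] [WQ RQ]; split; [exact: W_comp | move=> p /RQ /RP]. Qed.

Lemma inD_spoly g : polyfun g -> inD A (spoly g).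
Proof. by move=> pg; split; [exact: WeylOp_spoly | move=> p /(inRA_mul g)]. Qed.

Lemma inD_scal (l : C) : inD A (scal l).
Proof. by rewrite scal_spoly; apply/inD_spoly/polyfun_cst. Qed.

Lemma inD_sop j : inD A (sop j).
Proof. by rewrite sop_spoly; apply/inD_spoly/polyfun_coord. Qed.

Lemma inD_poly_sop j (q : {poly C}) : inD A (poly_sop j q).
Proof. exact/inD_spoly/polyfun_horner. Qed.

Lemma inDdeg_homop b g : inD A (homop b g) -> inDdeg A b (homop b g).
Proof.
move=> Dh; split=> // j p c.
by rewrite !sopE !homopE sopE [(c - b) 0 j]mxE [(- b) 0 j]mxE intrD intrN; ring.
Qed.

Lemma inDdeg_spoly g : polyfun g -> inDdeg A 0 (spoly g).
Proof.
by move=> pg; rewrite spoly_homop; apply/inDdeg_homop; rewrite -spoly_homop; apply: inD_spoly.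
Qed.

Lemma inDdeg_sop j : inDdeg A 0 (sop j).
Proof. by rewrite sop_spoly; apply/inDdeg_spoly/polyfun_coord. Qed.

Definition delta e : F d := fun c => (c == e)%:R.

Lemma inRA_delta e : inNA A e -> inRA A (delta e).
Proof.
rewrite /delta => NAe; split=> [|c]; last by case: (c =P e) => [-> | _] //; rewrite mulr0n eqxx.
by exists [:: e] => c; rewrite mem_seq1; case: (c =P e) => // _; rewrite mulr0n eqxx.
Qed.

Section Component.
Variables (P : F d -> F d) (s : seq (Zd d)) (gs : Zd d -> Zd d -> C).
Hypotheses (us : uniq s) (gs_poly : forall b, polyfun (gs b))
  (gs_notin : forall b, b \notin s -> gs b = fun=> 0)
  (Ps : forall p c, P p c = \sum_(b <- s) homop b (gs b) p c).

Lemma decomposition_delta e c : P (delta e) c = gs (c - e) e.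
Proof.
rewrite Ps (eq_bigr (fun b => if c - e == b then gs (c - e) e else 0)) => [|b _]; last first.
  rewrite homopE /delta; have -> : (c - b == e) = (c - e == b).
    by apply/eqP/eqP => <-; rewrite subKr.
  by case: (c - e =P b) => [<- | _]; rewrite ?subKr ?mulr1 ?mulr0.
rewrite -big_mkcond /=; have [ces | cenotin] := boolP (c - e \in s).
  by rewrite sum_eq_pred1.
by rewrite gs_notin // big1.
Qed.

Lemma inD_homogeneous_component b : inD A P -> inD A (homop b (gs b)).
Proof.
move=> [_ RP]; split=> [|p [[sp sp_supp] NAp]]; first exact: WeylOp_homop.
have nz_split c : homop b (gs b) p c != 0 -> gs b (c - b) != 0 /\ p (c - b) != 0.
  by rewrite homopE mulf_eq0 negb_or => /andP.
split=> [|c /nz_split[gnz pnz]].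
  exists (map (fun c => c + b) sp) => c /nz_split[_ /sp_supp cbsp].
  by apply/mapP; exists (c - b); rewrite ?subrK.
have [_] := RP _ (inRA_delta (NAp _ pnz)); apply.
by rewrite decomposition_delta subKr.
Qed.

End Component.

End DifferentialOperators.

Definition opsum d (s : seq (Zd d)) (G : Zd d -> F d -> F d) : F d -> F d :=
  foldr (fun b Q => opadd (G b) Q) (scal 0) s.

Lemma opsumE d (s : seq (Zd d)) G p c : opsum s G p c = \sum_(b <- s) G b p c.
Proof.
elim: s => [|b s ih] /=; first by rewrite big_nil /scal mul0r.
by rewrite big_cons /opadd ih.
Qed.

Lemma inD_opsum d (A : seq (Zd d)) s G : (forall b, inD A (G b)) -> inD A (opsum s G).
Proof. by move=> DG; elim: s => [|b s ih] /=; [exact: inD_scal | exact: inD_add]. Qed.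

Section Module.
Variables (d : nat) (A : seq (Zd d)) (M : zmodType) (act : (F d -> F d) -> M -> M).
Hypothesis HD : isDModule A act.
Implicit Types (P Q : F d -> F d) (l : C) (x y : M).

Lemma actD P x y : inD A P -> act P (x + y) = act P x + act P y.
Proof. by case: HD => h _ _ _; apply: h. Qed.

Lemma act_opadd P Q x : inD A P -> inD A Q -> act (opadd P Q) x = act P x + act Q x.
Proof. by case: HD => _ h _ _; apply: h. Qed.

Lemma act_opcomp P Q x : inD A P -> inD A Q -> act (opcomp P Q) x = act P (act Q x).
Proof. by case: HD => _ _ h _; apply: h. Qed.

Lemma act_id x : act id x = x.
Proof. by case: HD => _ _ _ h; apply: h. Qed.

Lemma act0 P : inD A P -> act P 0 = 0.
Proof. by move=> DP; apply: (addrI (act P 0)); rewrite -actD // !addr0. Qed.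

Lemma actN P x : inD A P -> act P (- x) = - act P x.
Proof. by move=> DP; apply: (addrI (act P x)); rewrite -actD // !subrr act0. Qed.

Lemma actB P x y : inD A P -> act P (x - y) = act P x - act P y.
Proof. by move=> DP; rewrite actD // actN. Qed.

Lemma act_sum P (I : Type) (r : seq I) (G : I -> M) : inD A P ->
  act P (\sum_(i <- r) G i) = \sum_(i <- r) act P (G i).
Proof. by move=> DP; apply: big_morph; [move=> u v; apply: actD | apply: act0]. Qed.

Lemma act_scal0 x : act (scal 0) x = 0.
Proof.
have scal00 : opadd (scal 0) (scal 0) = scal (d := d) 0.
  by apply: op_ext => p c; rewrite /opadd /scal mul0r addr0.
apply: (addrI (act (scal 0) x)); rewrite -act_opadd; try exact: inD_scal.
by rewrite scal00 addr0.
Qed.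

Lemma act_opsum s G x : (forall b, inD A (G b)) ->
  act (opsum s G) x = \sum_(b <- s) act (G b) x.
Proof.
move=> DG; elim: s => [|b s ih] /=; first by rewrite big_nil act_scal0.
by rewrite act_opadd ?big_cons ?ih //; apply: inD_opsum.
Qed.

Definition smul l x := act (scal l) x.

Lemma smulDl l1 l2 x : smul (l1 + l2) x = smul l1 x + smul l2 x.
Proof.
rewrite /smul -act_opadd; try exact: inD_scal.
by congr act; apply: op_ext => p c; rewrite /opadd /scal mulrDl.
Qed.

Lemma smulA l1 l2 x : smul l1 (smul l2 x) = smul (l1 * l2) x.
Proof.
rewrite /smul -act_opcomp; try exact: inD_scal.
by congr act; apply: op_ext => p c; rewrite /opcomp /scal mulrA.
Qed.

Lemma smul1 x : smul 1 x = x.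
Proof.
by rewrite /smul -[RHS]act_id; congr act; apply: op_ext => p c; rewrite /scal mul1r.
Qed.

Lemma smul0 x : smul 0 x = 0.
Proof. exact: act_scal0. Qed.

Lemma smulNl l x : smul (- l) x = - smul l x.
Proof. by apply: (addrI (smul l x)); rewrite -smulDl !subrr smul0. Qed.

Lemma smulr0 l : smul l 0 = 0.
Proof. exact/act0/inD_scal. Qed.

Lemma smul_sumr l (I : Type) (r : seq I) (G : I -> M) :
  smul l (\sum_(i <- r) G i) = \sum_(i <- r) smul l (G i).
Proof. exact/act_sum/inD_scal. Qed.

Lemma smul_suml (I : Type) (r : seq I) (G : I -> C) x :
  smul (\sum_(i <- r) G i) x = \sum_(i <- r) smul (G i) x.
Proof. by apply: (big_morph (smul^~ x)); [move=> l1 l2; apply: smulDl | apply: smul0]. Qed.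

Lemma act_smul P l x : inD A P -> act P (smul l x) = smul l (act P x).
Proof.
move=> DP; rewrite /smul -!act_opcomp //; try exact: inD_scal.
by congr act; apply: op_ext => p c; rewrite /opcomp WeylOp_scal //; case: DP.
Qed.

Lemma smulK l x : l != 0 -> smul l^-1 (smul l x) = x.
Proof. by move=> nz; rewrite smulA mulVf // smul1. Qed.

Lemma smul_eq0 l x : l != 0 -> smul l x = 0 -> x = 0.
Proof. by move=> nz lx0; rewrite -(smulK x nz) lx0 smulr0. Qed.

End Module.

Section Graded.
Variables (d : nat) (A : seq (Zd d)) (M : zmodType) (act : (F d -> F d) -> M -> M)
  (grade : Zd d -> M -> Prop).
Hypotheses (HD : isDModule A act) (HG : isGraded A act grade).
Implicit Types (P : F d -> F d) (a b : Zd d) (x y : M).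

Lemma grade0 a : grade a 0.
Proof. by case: HG. Qed.

Lemma gradeB a x y : grade a x -> grade a y -> grade a (x - y).
Proof. by case: HG => _ h _ _ _; apply: h. Qed.

Lemma grade_act b a P x : inDdeg A b P -> grade a x -> grade (a + b) (act P x).
Proof. by case: HG => _ _ _ _ h; apply: h. Qed.

Lemma grade_act0 a P x : inDdeg A 0 P -> grade a x -> grade a (act P x).
Proof. by move=> DP /(grade_act DP); rewrite addr0. Qed.

Lemma grade_smul a l x : grade a x -> grade a (smul act l x).
Proof. by apply/grade_act0; rewrite scal_spoly; apply/inDdeg_spoly/polyfun_cst. Qed.

Lemma sum_supported (s U : seq (Zd d)) (G : Zd d -> M) : uniq s -> uniq U ->
  {subset s <= U} -> (forall a, a \notin s -> G a = 0) ->
  \sum_(a <- U) G a = \sum_(a <- s) G a.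
Proof.
move=> us uU sU G0; apply: perm_big_supp; apply: uniq_perm; rewrite ?filter_uniq // => a.
rewrite !mem_filter; case: (boolP (a \in s)) => [/sU -> //|/G0 ->].
by rewrite eqxx.
Qed.

Lemma graded_decomposition_unique (s s' : seq (Zd d)) (G G' : Zd d -> M) :
  uniq s -> uniq s' -> (forall a, grade a (G a)) -> (forall a, grade a (G' a)) ->
  (forall a, a \notin s -> G a = 0) -> (forall a, a \notin s' -> G' a = 0) ->
  \sum_(a <- s) G a = \sum_(a <- s') G' a -> G =1 G'.
Proof.
move=> us us' gG gG' G0 G'0 GG' a; set U := undup (s ++ s').
have uU : uniq U := undup_uniq _.
have [_ _ _ indep _] := HG.
have sumU0 : \sum_(b <- U) (G b - G' b) = 0.
  rewrite sumrB (@sum_supported s U) ?(@sum_supported s' U) ?GG' ?subrr // => b bs;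
  by rewrite mem_undup mem_cat bs ?orbT.
case: (boolP (a \in U)) => [aU|].
  apply/eqP; rewrite -subr_eq0; apply/eqP.
  by apply: (indep U (fun b => G b - G' b) uU _ sumU0 a aU) => b _; apply: gradeB.
by rewrite mem_undup mem_cat negb_or => /andP[/G0 -> /G'0 ->].
Qed.

Lemma act_homop_zero b x : act (homop b (fun=> 0)) x = 0.
Proof.
have -> : homop b (fun=> 0) = scal 0 by apply: op_ext => p c; rewrite homopE /scal !mul0r.
exact: (act_scal0 HD x).
Qed.

Lemma homogeneous_component_act P x a0 s (G : Zd d -> M) :
  inD A P -> grade a0 x -> uniq s -> (forall a, a \in s -> grade a (G a)) ->
  act P x = \sum_(a <- s) G a ->
  forall a, a \in s ->
    exists g, [/\ polyfun g, inD A (homop (a - a0) g) & G a = act (homop (a - a0) g) x].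
Proof.
move=> DP gx us gG PxG a as_.
have [sP [gP [usP gP_poly gP0 Pdec]]] := WeylOp_homogeneous_decomposition (proj1 DP).
have DgP b : inD A (homop b (gP b)) := inD_homogeneous_component usP gP_poly gP0 Pdec b DP.
exists (gP (a - a0)); split => //.
pose G0 a := act (homop (a - a0) (gP (a - a0))) x.
pose G' a := if a \in s then G a else 0.
suff : G' a = G0 a by rewrite /G' as_.
apply: (@graded_decomposition_unique s [seq b + a0 | b <- sP]) => //.
- by rewrite map_inj_uniq // => b1 b2; apply: addIr.
- by move=> b; rewrite /G'; case: ifP => [/gG // | _]; apply: grade0.
- by move=> b; rewrite /G0 -[X in grade X](subrKC a0 b); apply/grade_act/gx/inDdeg_homop.
- by move=> b /negbTE bs; rewrite /G' bs.
- move=> b bsP; rewrite /G0 gP0 ?act_homop_zero //.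
  by apply: contra bsP => ?; apply/mapP; exists (b - a0); rewrite ?subrK.
rewrite (eq_big_seq G) => [|b bs]; last by rewrite /G' bs.
rewrite -PxG.
have -> : P = opsum sP (fun b => homop b (gP b)) by apply: op_ext => p c; rewrite opsumE Pdec.
by rewrite (act_opsum HD) // big_map; apply: eq_bigr => b _; rewrite /G0 addrK.
Qed.

End Graded.

Section GradedSimple.
Variables (d : nat) (A : seq (Zd d)) (M : zmodType) (act : (F d -> F d) -> M -> M)
  (grade : Zd d -> M -> Prop).
Hypotheses (HD : isDModule A act) (HG : isGraded A act grade)
  (HS : gradedSimple A act grade).
Variables (x : M) (a0 : Zd d).
Hypotheses (gx : grade a0 x) (x_neq0 : x != 0).

Lemma homogeneous_generator y : exists P, inD A P /\ act P x = y.
Proof.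
pose N y := exists P, inD A P /\ act P x = y.
have NG : isGradedSubmodule A act grade N.
  split; first split.
  - by exists (scal 0); split; [apply: inD_scal | apply: (act_scal0 HD)].
  - move=> _ _ [P [DP <-]] [Q [DQ <-]].
    by exists (opadd P Q); split; [apply: inD_add | apply: (act_opadd HD)].
  - move=> Q _ DQ [P [DP <-]].
    by exists (opcomp Q P); split; [apply: inD_comp | apply: (act_opcomp HD)].
  move=> _ s G [P [DP <-]] us gG PxG a as_.
  have [g [_ Dg ->]] := homogeneous_component_act HD HG DP gx us gG PxG as_.
  by exists (homop (a - a0) g).
have [_ /(_ N NG) [N0 | Nall]] := HS; last exact: Nall.
have Nx : N x by exists (scal 1); split; [apply: inD_scal | apply: (smul1 HD)].
by move: x_neq0; rewrite (N0 _ Nx) eqxx.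
Qed.

Lemma homogeneous_from_generator y a : grade a y ->
  exists g, [/\ polyfun g, inD A (homop (a - a0) g) & y = act (homop (a - a0) g) x].
Proof.
move=> gy; have [P [DP Pxy]] := homogeneous_generator y.
have Pxy' : act P x = \sum_(b <- [:: a]) y by rewrite big_seq1.
have gy' b : b \in [:: a] -> grade b y by rewrite mem_seq1 => /eqP ->.
by apply: (homogeneous_component_act HD HG DP gx _ gy' Pxy'); rewrite ?mem_head.
Qed.

Lemma weight_shift j mu y a : act (sop j) x = smul act mu x -> grade a y ->
  act (sop j) y = smul act (mu + ((a - a0) 0 j)%:~R) y.
Proof.
move=> xmu /homogeneous_from_generator [g [_ Dg ->]].
set Q := homop (a - a0) g; have [_ Qdeg] := inDdeg_homop Dg.
have sopQ : opcomp (sop j) Q = opadd (opcomp Q (sop j)) (opcomp (scal ((a - a0) 0 j)%:~R) Q).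
  by apply: op_ext => p c; rewrite /opadd /opcomp /scal -Qdeg subrKC.
have Dsop := inD_sop A j; have Dscal := inD_scal A ((a - a0) 0 j)%:~R.
rewrite -(act_opcomp HD _ Dsop Dg) sopQ (act_opadd HD _ (inD_comp Dg Dsop) (inD_comp Dscal Dg)).
rewrite (act_opcomp HD _ Dg Dsop) (act_opcomp HD _ Dscal Dg) xmu (act_smul HD _ _ Dg).
by rewrite -(smulDl HD).
Qed.

End GradedSimple.


Section WeightSeparation.
Variables (d : nat) (A : seq (Zd d)) (M : zmodType) (act : (F d -> F d) -> M -> M).
Hypothesis HD : isDModule A act.
Variable N : M -> Prop.
Hypothesis HN : isDSubmodule A act N.

Lemma submodule_act P x : inD A P -> N x -> N (act P x).
Proof. by case: HN => _ _; apply. Qed.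

Lemma submodule_smul l x : N x -> N (smul act l x).
Proof. exact/submodule_act/inD_scal. Qed.

Lemma submoduleB x y : N x -> N y -> N (x - y).
Proof.
case: HN => _ ND _ Nx Ny; apply: ND => //.
suff -> : - y = smul act (-1) y by apply: submodule_smul.
by rewrite (smulNl HD) (smul1 HD).
Qed.

Lemma submodule_weight_components (w : Zd d -> 'I_d -> C) s (G : Zd d -> M) :
  uniq s -> {in s &, injective w} ->
  (forall a, a \in s -> forall j, act (sop j) (G a) = smul act (w a j) (G a)) ->
  N (\sum_(a <- s) G a) -> forall a, a \in s -> N (G a).
Proof.
have [n] := ubnP (size s); elim: n s G => // n ih s G s_lt us w_inj eigG NG a as_.
case sa: (rem a s) => [|a' r].
  by move: NG; rewrite (big_rem a) //= sa big_nil addr0.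
have a's : a' \in rem a s by rewrite sa mem_head.
move: (a's); rewrite mem_rem_uniq // => /andP[a'a {}a's].
have [j wj] : exists j, w a' j != w a j.
  apply/existsP; apply: contraNT a'a; rewrite negb_exists => /forallP wa'a.
  by apply/eqP/w_inj => //; apply: funext => j; apply/eqP/negPn/wa'a.
pose G' b := smul act (w b j - w a' j) (G b).
have NG' : N (\sum_(b <- rem a' s) G' b).
  have -> : \sum_(b <- rem a' s) G' b = \sum_(b <- s) G' b.
    by rewrite [RHS](big_rem a') //= /G' subrr (smul0 HD) add0r.
  have -> : \sum_(b <- s) G' b =
      act (sop j) (\sum_(b <- s) G b) - smul act (w a' j) (\sum_(b <- s) G b).
    rewrite (act_sum HD _ _ (inD_sop A j)) (smul_sumr HD) -sumrB.
    by apply: eq_big_seq => b bs; rewrite /G' eigG // (smulDl HD) (smulNl HD).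
  by apply: submoduleB; [apply/submodule_act/NG/inD_sop | apply: submodule_smul].
have ar : a \in rem a' s by rewrite mem_rem_uniq // inE eq_sym a'a.
have sr : (size (rem a' s) < n)%N.
  by rewrite size_rem //; move: s_lt (size_rem as_); rewrite sa /=; case: (size s).
have eigG' b : b \in rem a' s -> forall k, act (sop k) (G' b) = smul act (w b k) (G' b).
  move=> /mem_rem bs k; rewrite /G' (act_smul HD _ _ (inD_sop A k)) eigG //.
  by rewrite !(smulA HD) mulrC.
have w_inj' : {in rem a' s &, injective w} by move=> ? ? /mem_rem ? /mem_rem; apply: w_inj.
have := ih _ G' sr (rem_uniq _ us) w_inj' eigG' NG' a ar.
have wa_neq0 : w a j - w a' j != 0 by rewrite subr_eq0 eq_sym.
by rewrite -[G a](smulK HD _ wa_neq0); apply: submodule_smul.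
Qed.

End WeightSeparation.

Section WordSpan.
Variables (d : nat) (A : seq (Zd d)) (M : zmodType) (act : (F d -> F d) -> M -> M).
Hypothesis HD : isDModule A act.
Variable x : M.
Implicit Types (y z : M) (l : C) (g : Zd d -> C).

Fixpoint sword (k : seq 'I_d) : F d -> F d :=
  if k is j :: k' then opcomp (sop j) (sword k') else scal 1.

Lemma inD_sword k : inD A (sword k).
Proof. by elim: k => [|j k ih] /=; [apply: inD_scal | apply/inD_comp/ih/inD_sop]. Qed.

(* The vectors w(s) x, w a word in the s_j, enumerated by [nat]; non-codes give 0. *)
Definition word_vec n : M :=
  if @unpickle (seq 'I_d) n is Some k then act (sword k) x else 0.

Definition span_upto n y := exists c : nat -> C, y = \sum_(i < n) smul act (c i) (word_vec i).

Definition word_span y := exists n, span_upto n y.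

Lemma span_uptoW m n y : (m <= n)%N -> span_upto m y -> span_upto n y.
Proof.
move=> mn [c ->]; exists (fun i => if (i < m)%N then c i else 0).
rewrite (big_ord_widen n (fun i => smul act (c i) (word_vec i)) mn) big_mkcond /=.
by apply: eq_bigr => i _; case: ifP; rewrite ?(smul0 HD).
Qed.

Lemma word_span0 : word_span 0.
Proof. by exists 0%N, (fun=> 0); rewrite big_ord0. Qed.

Lemma word_spanD y z : word_span y -> word_span z -> word_span (y + z).
Proof.
move=> [m ym] [n zn]; exists (maxn m n).
have [c ->] := span_uptoW (leq_maxl m n) ym; have [c' ->] := span_uptoW (leq_maxr m n) zn.
by exists (fun i => c i + c' i); rewrite -big_split; apply: eq_bigr => i _; rewrite (smulDl HD).
Qed.

Lemma word_span_smul l y : word_span y -> word_span (smul act l y).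
Proof.
move=> [n [c ->]]; exists n, (fun i => l * c i).
by rewrite (smul_sumr HD); apply: eq_bigr => i _; rewrite (smulA HD).
Qed.

Lemma word_span_sum (I : Type) (r : seq I) (G : I -> M) :
  (forall i, word_span (G i)) -> word_span (\sum_(i <- r) G i).
Proof.
move=> spanG; elim: r => [|i r ih]; first by rewrite big_nil; apply: word_span0.
by rewrite big_cons; apply: word_spanD; [apply: spanG | apply: ih].
Qed.

Lemma word_span_word_vec n : word_span (word_vec n).
Proof.
exists n.+1, (fun i => (i == n)%:R).
rewrite big_ord_recr /= eqxx (smul1 HD) big1 ?add0r // => i _.
by rewrite (ltn_eqF (ltn_ord i)) (smul0 HD).
Qed.

Lemma word_span_sop j y : word_span y -> word_span (act (sop j) y).
Proof.
move=> [n [c ->]]; rewrite (act_sum HD _ _ (inD_sop A j)).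
apply: word_span_sum => i; rewrite (act_smul HD _ _ (inD_sop A j)); apply: word_span_smul.
rewrite /word_vec; case: unpickle => [k|]; last first.
  by rewrite (act0 HD (inD_sop A j)); apply: word_span0.
rewrite -(act_opcomp HD _ (inD_sop A j) (inD_sword k)).
by have := word_span_word_vec (pickle (j :: k)); rewrite /word_vec pickleK.
Qed.

Lemma word_span_spoly g y : polyfun g -> word_span y -> word_span (act (spoly g) y).
Proof.
move=> pg; elim: pg y => [l|j|g1 g2 pg1 ih1 pg2 ih2|g1 g2 pg1 ih1 pg2 ih2] y spany.
- by rewrite -scal_spoly; apply: word_span_smul.
- by rewrite -sop_spoly; apply: word_span_sop.
- have -> : spoly (fun c => g1 c + g2 c) = opadd (spoly g1) (spoly g2).
    by apply: op_ext => p c; rewrite /opadd /spoly mulrDl.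
  rewrite (act_opadd HD _ (inD_spoly A pg1) (inD_spoly A pg2)).
  by apply: word_spanD; [apply: ih1 | apply: ih2].
- have -> : spoly (fun c => g1 c * g2 c) = opcomp (spoly g1) (spoly g2).
    by apply: op_ext => p c; rewrite /opcomp /spoly mulrA.
  by rewrite (act_opcomp HD _ (inD_spoly A pg1) (inD_spoly A pg2)); apply/ih1/ih2.
Qed.

Lemma word_span_x : word_span x.
Proof.
have := word_span_word_vec (pickle ([::] : seq 'I_d)).
by rewrite /word_vec pickleK /= -/(smul act 1 x) (smul1 HD).
Qed.

End WordSpan.

Lemma exists_left_kernel m n (B : 'M[C]_(m, n)) : (n < m)%N ->
  exists2 v : 'rV_m, v != 0 & v *m B = 0.
Proof.
move=> nm; have /rowV0Pn [v /sub_kermxP vB v_neq0] : kermx B != 0.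
  rewrite -mxrank_eq0 mxrank_ker subn_eq0 -ltnNge.
  exact: leq_ltn_trans (rank_leq_col B) nm.
by exists v.
Qed.

Lemma lagrange_free (R : idomainType) (ms : seq R) (c : 'I_(size ms) -> R) : uniq ms ->
  \sum_(i < size ms) c i *: \prod_(m <- rem ms`_i ms) ('X - m%:P) = 0 -> forall i, c i = 0.
Proof.
move=> ums f0 i; have := congr1 (horner^~ ms`_i) f0.
have msP (k : 'I_(size ms)) : ms`_k \in ms by apply: mem_nth.
have other (k : 'I_(size ms)) : k != i ->
    (c k *: \prod_(m <- rem ms`_k ms) ('X - m%:P)).[ms`_i] = 0.
  move=> ki; have ik : ms`_i \in rem ms`_k ms.
    by rewrite mem_rem_uniq // inE msP andbT nth_uniq // eq_sym.
  by rewrite hornerZ horner_prod (big_rem _ ik) /= hornerXsubC subrr mul0r mulr0.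
rewrite horner0 horner_sum (bigD1 i) //= (eq_bigr (fun=> 0) other) big1_eq addr0.
rewrite hornerZ horner_prod => /eqP; rewrite mulf_eq0 prodf_seq_eq0 => /orP[/eqP // | /hasP[m]].
by rewrite mem_rem_uniq // => /andP[m_neq _]; rewrite hornerXsubC subr_eq0 eq_sym (negbTE m_neq).
Qed.

Section Dixmier.
Variables (d : nat) (A : seq (Zd d)) (M : zmodType) (act : (F d -> F d) -> M -> M)
  (grade : Zd d -> M -> Prop).
Hypotheses (HD : isDModule A act) (HG : isGraded A act grade)
  (HS : gradedSimple A act grade).
Variables (x : M) (a0 : Zd d).
Hypotheses (gx : grade a0 x) (x_neq0 : x != 0).
Variable j : 'I_d.
Implicit Types (y z : M) (l mu : C) (q : {poly C}) (g : Zd d -> C).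

Local Notation T := (act (sop j)).
Local Notation smul := (smul act).
Local Notation pev q y := (act (poly_sop j q) y).

Lemma pevM q1 q2 y : pev (q1 * q2) y = pev q1 (pev q2 y).
Proof.
rewrite -(act_opcomp HD _ (inD_poly_sop A j q1) (inD_poly_sop A j q2)); congr act.
by apply: op_ext => p c; rewrite /opcomp /poly_sop /spoly hornerM mulrA.
Qed.

Lemma pevD q1 q2 y : pev (q1 + q2) y = pev q1 y + pev q2 y.
Proof.
rewrite -(act_opadd HD _ (inD_poly_sop A j q1) (inD_poly_sop A j q2)); congr act.
by apply: op_ext => p c; rewrite /opadd /poly_sop /spoly hornerD mulrDl.
Qed.

Lemma pevZ l q y : pev (l *: q) y = smul l (pev q y).
Proof.
rewrite /smul -(act_opcomp HD _ (inD_scal A l) (inD_poly_sop A j q)); congr act.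
by apply: op_ext => p c; rewrite /opcomp /poly_sop /spoly /scal hornerZ mulrA.
Qed.

Lemma pev0 y : pev 0 y = 0.
Proof.
have -> : poly_sop j 0 = scal 0 by apply: op_ext => p c; rewrite /poly_sop /spoly horner0.
exact: (act_scal0 HD).
Qed.

Lemma pev_sum (I : Type) (r : seq I) (Q : I -> {poly C}) y :
  pev (\sum_(i <- r) Q i) y = \sum_(i <- r) pev (Q i) y.
Proof. by apply: (big_morph (fun q => pev q y)); [move=> q1 q2; apply: pevD | apply: pev0]. Qed.

Lemma pev_XsubC l y : pev ('X - l%:P) y = T y - smul l y.
Proof.
rewrite -(smulNl HD) /smul -(act_opadd HD _ (inD_sop A j) (inD_scal A (- l))); congr act.
by apply: op_ext => p c; rewrite /opadd /poly_sop /spoly /scal sopE !hornerE mulrDl mulNr.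
Qed.

Lemma act_spoly_sop g y : polyfun g -> act (spoly g) (T y) = T (act (spoly g) y).
Proof.
move=> pg; have Dg := inD_spoly A pg; have Dsop := inD_sop A j.
rewrite -(act_opcomp HD _ Dg Dsop) -(act_opcomp HD _ Dsop Dg); congr act.
by apply: op_ext => p c; rewrite /opcomp /spoly !sopE mulrCA.
Qed.

Lemma eigenvector_spreads mu z : grade a0 z -> z != 0 -> T z = smul mu z ->
  forall y, grade a0 y -> T y = smul mu y.
Proof.
move=> gz z_neq0 Tz y /(homogeneous_from_generator HD HG HS gz z_neq0) [g [pg _ ->]].
rewrite subrr -spoly_homop -act_spoly_sop // Tz.
exact: (act_smul HD _ _ (inD_spoly A pg)).
Qed.

Section NoEigenvector.
Hypothesis no_eigenvector : forall mu z, grade a0 z -> T z = smul mu z -> z = 0.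

Lemma resolvent mu : exists u, [/\ grade a0 u, T u - smul mu u = x & word_span act x u].
Proof.
set z := T x - smul mu x.
have gz : grade a0 z.
  by apply: (gradeB HG); [apply/(grade_act0 HG)/gx/inDdeg_sop | apply: (grade_smul HG)].
have z_neq0 : z != 0.
  apply: contra_neq x_neq0 => /eqP; rewrite subr_eq0 => /eqP.
  exact: no_eigenvector gx.
have [g [pg _]] := homogeneous_from_generator HD HG HS gz z_neq0 gx.
rewrite subrr -spoly_homop => xgz; exists (act (spoly g) x); split.
- by apply/(grade_act0 HG)/gx/inDdeg_spoly.
- rewrite -act_spoly_sop // -(act_smul HD _ _ (inD_spoly A pg)).
  by rewrite -(actB HD _ _ (inD_spoly A pg)); apply: esym.
- exact: (word_span_spoly HD pg (word_span_x HD x)).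
Qed.

Lemma pev_prod_XsubC_neq0 (rs : seq C) y : grade a0 y -> y != 0 ->
  pev (\prod_(r <- rs) ('X - r%:P)) y != 0.
Proof.
move=> gy y_neq0; elim: rs => [|r rs ih].
  have -> : poly_sop j (\prod_(r <- [::]) ('X - r%:P)) = scal 1.
    by apply: op_ext => p c; rewrite big_nil /poly_sop /spoly hornerC.
  by rewrite -/(smul 1 y) (smul1 HD).
rewrite big_cons pevM pev_XsubC; apply: contra_neq ih => /eqP; rewrite subr_eq0 => /eqP.
by apply: no_eigenvector; apply/(grade_act0 HG)/gy/inDdeg_spoly/polyfun_horner.
Qed.

Lemma pev_x_eq0 q : pev q x = 0 -> q = 0.
Proof.
move=> qx0; apply/eqP; apply: contraT => q_neq0.
have [rs qE] := closed_field_poly_normal q.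
have lc_neq0 : lead_coef q != 0 by rewrite lead_coef_eq0.
move: qx0; rewrite qE pevZ => /(smul_eq0 HD lc_neq0) /eqP.
by rewrite (negbTE (pev_prod_XsubC_neq0 rs gx x_neq0)).
Qed.

Lemma resolvents_free (u : C -> M) (ms : seq C) (c : 'I_(size ms) -> C) :
  (forall mu, T (u mu) - smul mu (u mu) = x) -> uniq ms ->
  \sum_(i < size ms) smul (c i) (u ms`_i) = 0 -> forall i, c i = 0.
Proof.
(* Apply prod_m (s_j - m): the relation becomes q(s_j) x = 0 for a Lagrange combination q. *)
move=> uP ums cu0; apply: lagrange_free => //; apply: pev_x_eq0.
pose Pms := \prod_(m <- ms) ('X - m%:P).
have Pms_u (i : 'I_(size ms)) : pev Pms (u ms`_i) = pev (\prod_(m <- rem ms`_i ms) ('X - m%:P)) x.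
  by rewrite /Pms (big_rem ms`_i) ?mem_nth //= mulrC pevM pev_XsubC uP.
rewrite pev_sum; under eq_bigr do rewrite pevZ -Pms_u -(act_smul HD _ _ (inD_poly_sop A j _)).
by rewrite -(act_sum HD _ _ (inD_poly_sop A j _)) cu0 (act0 HD (inD_poly_sop A j _)).
Qed.

Lemma no_eigenvector_false : False.
Proof.
have [u uP] := choice resolvent.
have cover r : exists n, span_upto act x n (u (Complex r 0)).
  by case: (uP (Complex r 0)) => _ _ [n spanu]; exists n.
have [n [s [us ns sQ]]] := large_fiber cover.
set ms := [seq Complex r 0 : C | r <- s].
have ums : uniq ms by rewrite map_inj_uniq // => r1 r2 [].
have /choice[cf cfE] : forall k : 'I_(size ms),
    exists c : nat -> C, u ms`_k = \sum_(i < n) smul (c i) (word_vec act x i).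
  move=> k; have ks : (k < size s)%N by rewrite -(size_map (fun r => Complex r 0 : C) s).
  by rewrite (nth_map 0) //; apply/sQ/mem_nth.
pose B := \matrix_(k < size ms, i < n) cf k i.
have [v v_neq0 vB] : exists2 v : 'rV_(size ms), v != 0 & v *m B = 0.
  by apply: exists_left_kernel; rewrite size_map.
suff v0 k : v 0 k = 0 by apply/negP: v_neq0; apply/negPn/eqP/rowP => k; rewrite v0 mxE.
have uT mu : T (u mu) - smul mu (u mu) = x by case: (uP mu).
apply: (resolvents_free uT ums) k.
under eq_bigr do rewrite cfE (smul_sumr HD).
rewrite exchange_big big1 //= => i _; under eq_bigr do rewrite (smulA HD).
rewrite -(smul_suml HD); have -> : \sum_(k < size ms) v 0 k * cf k i = (v *m B) 0 i.
  by rewrite mxE; apply: eq_bigr => k _; rewrite mxE.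
by rewrite vB mxE (smul0 HD).
Qed.

End NoEigenvector.

Lemma homogeneous_eigenvalue : exists mu, forall y, grade a0 y -> T y = smul mu y.
Proof.
have [[mu [z [gz z_neq0 Tz]]] | no_eig] :=
  EM (exists mu z, [/\ grade a0 z, z != 0 & T z = smul mu z]).
  by exists mu; apply: eigenvector_spreads gz z_neq0 Tz.
exfalso; apply: no_eigenvector_false => mu z gz Tz; apply/eqP; apply: contraT => z_neq0.
by case: no_eig; exists mu, z.
Qed.

End Dixmier.

Lemma exists_homogeneous_neq0 d (A : seq (Zd d)) (M : zmodType)
    (act : (F d -> F d) -> M -> M) (grade : Zd d -> M -> Prop) :
  isGraded A act grade -> (exists y : M, y != 0) -> exists x a, grade a x /\ x != 0.
Proof.
move=> [_ _ decomp _ _] [y y_neq0]; have [s [f [_ gf yE]]] := decomp y.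
apply: contrapT => no_hom; move/eqP: y_neq0; apply.
rewrite yE big1 // => a _; apply: contrapT => /eqP fa_neq0.
by apply: no_hom; exists (f a), a.
Qed.

Section WeightVector.
Variables (d : nat) (A : seq (Zd d)) (M : zmodType) (act : (F d -> F d) -> M -> M)
  (grade : Zd d -> M -> Prop).
Hypotheses (HD : isDModule A act) (HG : isGraded A act grade)
  (HS : gradedSimple A act grade).
Variables (x : M) (a0 : Zd d) (alpha : 'I_d -> C).
Hypotheses (gx : grade a0 x) (x_neq0 : x != 0)
  (x_weight : forall j, act (sop j) x = smul act (alpha j) x).

Lemma submodule_graded N : isDSubmodule A act N -> isGradedSubmodule A act grade N.
Proof.
move=> HN; split=> // y s f Ny us gf yE.
pose w a j := alpha j + ((a - a0) 0 j)%:~R.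
apply: (submodule_weight_components HD HN (w := w)) => //; last by rewrite -yE.
- move=> a a' _ _ waa'; apply/rowP => j.
  have /addrI /intr_inj := congr1 (fun w => w j) waa'.
  by rewrite !mxE => /addIr.
- by move=> a as_ j; apply: (weight_shift HD HG HS gx x_neq0); [apply: x_weight | apply: gf].
Qed.

Lemma isoL_of_weight_vector : isoL A act alpha.
Proof.
split; first by split=> [|N /submodule_graded]; [exists x | case: HS => _; apply].
exists x; split; first exact: x_weight.
exact: (homogeneous_generator HD HG HS gx x_neq0).
Qed.

End WeightVector.

Theorem proposition4p5 (d : nat) (A : seq (Zd d)) (M : zmodType)
  (act : (F d -> F d) -> M -> M) (grade : Zd d -> M -> Prop) :
  generates_Zd A ->
  isDModule A act ->
  isGraded A act grade ->
  gradedSimple A act grade ->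
  exists alpha : 'I_d -> C, isoL A act alpha.
Proof.
(* The argument does not use that A generates Z^d. *)
move=> _ HD HG HS.
have [x [a0 [gx x_neq0]]] := exists_homogeneous_neq0 HG (proj1 HS).
have /choice [alpha alphaP] := fun j => homogeneous_eigenvalue HD HG HS gx x_neq0 j.
exists alpha; apply: (isoL_of_weight_vector HD HG HS gx x_neq0) => j.
exact: alphaP.
Qed.
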